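(* Let $P$ be a finite poset, let $P'$ be a barycentric subdivision of $P$, and let $a,b,c,d\in P'$. If $a<c$, $b<d$, $(b,c)\in\mathrm{Diag}(P')$ and $(a,b),(d,c)\in\mathrm{Inc}(P')$, then $b,c\in P$. If, moreover, $(a,c),(b,d)\in\mathrm{Diag}(P')$ and $a<d$, then $a,d\in P$.
   Context: For a poset $Q$, $x\prec y$ means $x<y$ with no $z$ satisfying $x<z<y$; $\mathrm{Diag}(Q)$ is the set of such covering pairs $(x,y)$, and $\mathrm{Inc}(Q)$ is the set of pairs of incomparable elements. A barycentric subdivision $P'$ of (the diagram of) $P$ is obtained by adding finitely many (possibly zero) new vertices on each edge $(x,y)$ of $\mathrm{Diag}(P)$, the added vertices on an edge forming a chain strictly between $x$ and $y$; $P'$ carries the induced order and contains $P$ as a subposet. Each added vertex has a unique upper cover and a unique lower cover in $P'$. *)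

From mathcomp Require Import all_boot all_order.
Set Implicit Arguments. Unset Strict Implicit. Unset Printing Implicit Defensive.
Import Order.TTheory.
Local Open Scope order_scope.

Definition covers (d : Order.disp_t) (T : finPOrderType d) (x y : T) : bool :=
  (x < y) && ~~ [exists z : T, (x < z) && (z < y)].

(* Points of a barycentric subdivision of P = T:
   V x   : an original element x of P;
   E x y i : the i-th added vertex (counted from the bottom, i = 0..k x y - 1)
             on the covering edge (x,y) of Diag(P). *)
Inductive spt (T : Type) := V of T | E of T & T & nat.
Arguments V {T}. Arguments E {T}.

Definition is_vertex T (p : spt T) : bool := if p is V _ then true else false.

Section Subdiv.
Context (d : Order.disp_t) (T : finPOrderType d) (k : T -> T -> nat).

(* k x y = number of vertices added on edge (x,y) (only relevant when x ≺ y). *)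
Definition svalid (p : spt T) : bool :=
  match p with V _ => true | E x y i => covers x y && (i < k x y)%N end.

(* The order of P': reachability in the subdivided diagram
   (chain x < E x y 0 < ... < E x y (k-1) < y on each edge). *)
Definition sle (p q : spt T) : bool :=
  match p, q with
  | V x, V y => x <= y
  | V z, E x _ _ => z <= x
  | E _ y _, V z => y <= z
  | E x y i, E x' y' j => ((x == x') && (y == y') && (i <= j)%N) || (y <= x')
  end.

Definition subdiv := {p : spt T | svalid p}.

Definition sle' (p q : subdiv) : bool := sle (val p) (val q).
Definition slt' (p q : subdiv) : Prop := sle' p q /\ p <> q.
Definition sdiag (p q : subdiv) : Prop :=
  slt' p q /\ ~ (exists z : subdiv, slt' p z /\ slt' z q).
Definition sinc (p q : subdiv) : Prop := ~~ sle' p q /\ ~~ sle' q p.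
Definition inP (p : subdiv) : bool := is_vertex (val p).
End Subdiv.

(** A point added on an edge (x, y) of Diag(P) has a unique upper cover and a
    unique lower cover in P', and these are comparable with every point above,
    respectively below, it.  If b or c were such an added point, the cover
    (b, c) would force c <= d, resp. a <= b, contradicting incomparability;
    the same argument applied to the covers (a, c) and (b, d) gives a, d in P. *)
From Stdlib Require Import Classical.
From mathcomp Require Import all_boot all_order.
Set Implicit Arguments. Unset Strict Implicit. Unset Printing Implicit Defensive.

Section Subdivision.
Context (disp : Order.disp_t) (T : finPOrderType disp) (k : T -> T -> nat).

Lemma slt'E (p q : subdiv k) : slt' p q <-> sle (val p) (val q) /\ val p <> val q.
Proof.
split=> [[le_pq ne_pq] | [le_pq ne_pq]]; split=> //.
  by move/val_inj.
by move=> eq_pq; apply: ne_pq; rewrite eq_pq.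
Qed.

Lemma sdiag_le_of_least_above (p q s : subdiv k) :
  slt' p s -> (forall z, slt' p z -> sle' s z) ->
  sdiag p q -> forall z, slt' p z -> sle' q z.
Proof.
move=> lt_ps least_s [lt_pq no_between] z lt_pz.
have [<- | ne_sq] := classic (s = q); first exact: least_s.
by exfalso; apply: no_between; exists s; split=> //; split=> //; apply: least_s.
Qed.

Lemma sdiag_ge_of_greatest_below (p q s : subdiv k) :
  slt' s q -> (forall z, slt' z q -> sle' z s) ->
  sdiag p q -> forall z, slt' z q -> sle' z p.
Proof.
move=> lt_sq greatest_s [lt_pq no_between] z lt_zq.
have [-> | ne_ps] := classic (p = s); first exact: greatest_s.
by exfalso; apply: no_between; exists s; split=> //; split=> //; apply: greatest_s.
Qed.

Definition succ_pt (x y : T) (i : nat) : spt T :=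
  if i.+1 < k x y then E x y i.+1 else V y.

Definition pred_pt (x y : T) (j : nat) : spt T :=
  if j is i.+1 then E x y i else V x.

Lemma svalid_succ_pt x y i : svalid k (E x y i) -> svalid k (succ_pt x y i).
Proof. by rewrite /succ_pt; case: ifP => //= -> /andP[->]. Qed.

Lemma svalid_pred_pt x y j : svalid k (E x y j) -> svalid k (pred_pt x y j).
Proof. by case: j => //= j /andP[-> /ltnW]. Qed.

Lemma sle_succ_pt x y i : sle (E x y i) (succ_pt x y i).
Proof. by rewrite /succ_pt; case: ifP => _ /=; rewrite ?eqxx ?leqnSn. Qed.

Lemma sle_pred_pt x y j : sle (pred_pt x y j) (E x y j).
Proof. by case: j => [|j] /=; rewrite ?eqxx ?leqnSn. Qed.

Lemma succ_pt_neq x y i : succ_pt x y i <> E x y i.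
Proof. by rewrite /succ_pt; case: ifP => // _ [/esym/n_Sn]. Qed.

Lemma pred_pt_neq x y j : pred_pt x y j <> E x y j.
Proof. by case: j => // j [/n_Sn]. Qed.

Lemma succ_pt_le x y i q : svalid k q ->
  sle (E x y i) q -> q <> E x y i -> sle (succ_pt x y i) q.
Proof.
rewrite /succ_pt; case: q => [w | x' y' j] //= valid_q.
  by case: ifP.
case/orP => [/andP[/andP[/eqP-> /eqP->] le_ij] | le_yx'] ne_q; last first.
  by case: ifP => _ //=; rewrite le_yx' orbT.
have lt_ij : i < j by rewrite ltn_neqAle le_ij andbT; apply/eqP => eq_ij; subst.
case/andP: valid_q => _ lt_jk.
by rewrite (leq_ltn_trans lt_ij lt_jk) /= !eqxx lt_ij.
Qed.

Lemma pred_pt_ge x y j q :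
  sle q (E x y j) -> q <> E x y j -> sle q (pred_pt x y j).
Proof.
case: q => [w | x' y' i] //=; first by case: j.
case/orP => [/andP[/andP[/eqP-> /eqP->] le_ij] | le_y'x] ne_q; last first.
  by case: j {ne_q} => //= j; rewrite le_y'x orbT.
have lt_ij : i < j by rewrite ltn_neqAle le_ij andbT; apply/eqP => eq_ij; subst.
by case: j lt_ij {le_ij ne_q} => // j /=; rewrite ltnS => ->; rewrite !eqxx.
Qed.

Lemma sdiag_added_point_le (p q z : subdiv k) :
  ~~ inP p -> sdiag p q -> slt' p z -> sle' q z.
Proof.
case: p => [[// | x y i] valid_p] _ cov_pq lt_pz.
pose s : subdiv k := exist _ (succ_pt x y i) (svalid_succ_pt valid_p).
apply: (sdiag_le_of_least_above (s := s) _ _ cov_pq lt_pz).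
  by apply/slt'E; split; [exact: sle_succ_pt | exact/nesym/succ_pt_neq].
move=> z' /slt'E[le_z ne_z].
exact: succ_pt_le (valP z') le_z (nesym ne_z).
Qed.

Lemma sdiag_added_point_ge (p q z : subdiv k) :
  ~~ inP q -> sdiag p q -> slt' z q -> sle' z p.
Proof.
case: q => [[// | x y j] valid_q] _ cov_pq lt_zq.
pose s : subdiv k := exist _ (pred_pt x y j) (svalid_pred_pt valid_q).
apply: (sdiag_ge_of_greatest_below (s := s) _ _ cov_pq lt_zq).
  by apply/slt'E; split; [exact: sle_pred_pt | exact/pred_pt_neq].
move=> z' /slt'E[le_z ne_z].
exact: pred_pt_ge le_z ne_z.
Qed.

End Subdivision.

Theorem lemma1 (disp : Order.disp_t) (T : finPOrderType disp) (k : T -> T -> nat)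
  (a b c d : subdiv k) :
  slt' a c -> slt' b d -> sdiag b c -> sinc a b -> sinc d c ->
  (inP b /\ inP c) /\
  (sdiag a c -> sdiag b d -> slt' a d -> inP a /\ inP d).
Proof.
move=> lt_ac lt_bd cov_bc [nle_ab _] [_ nle_cd]; split.
  split; apply/negPn/negP => notP.
    by move: nle_cd; rewrite (sdiag_added_point_le notP cov_bc lt_bd).
  by move: nle_ab; rewrite (sdiag_added_point_ge notP cov_bc lt_ac).
move=> cov_ac cov_bd lt_ad; split; apply/negPn/negP => notP.
  by move: nle_cd; rewrite (sdiag_added_point_le notP cov_ac lt_ad).
by move: nle_ab; rewrite (sdiag_added_point_ge notP cov_bd lt_ad).
Qed.
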